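(* Let $E\subset\mathbb{R}^2$ be an arbitrary set. Call a function $v:E\to\mathbb{R}$ a semistatic strategy if there exist functions $h,g:\mathbb{R}\to\mathbb{R}$ such that $v(x,y)=h(x)(y-x)+g(y)$ for all $(x,y)\in E$. Then the set of semistatic strategies on $E$ is closed under pointwise convergence: if $v_n:E\to\mathbb{R}$, $n\in\mathbb{N}$, are semistatic strategies and $v_n(x,y)\to v(x,y)$ for every $(x,y)\in E$, then $v:E\to\mathbb{R}$ is a semistatic strategy.
   Context: Interpretation: $x$ is the price of a stock at date 1 and $y$ its price at date 2; $h$ is the stock position and $g$ the option position. *)

From Stdlib Require Import Reals.
Open Scope R_scope.

(* A function v : E -> R is represented by a total function R -> R -> R whose
   values outside E are irrelevant. v is a semistatic strategy on E if there
   exist h g : R -> R with v x y = h x * (y - x) + g y for all (x,y) in E. *)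
Definition semistatic (E : R -> R -> Prop) (v : R -> R -> R) : Prop :=
  exists h g : R -> R, forall x y : R, E x y -> v x y = h x * (y - x) + g y.

(* If v (x, y) = h x * (y - x) + g y on E and (x, y1), (x, y2) are points of E
   with y1, y2 <> x, eliminating h x expresses g y2 as an affine function of
   g y1 whose coefficients are values of v. Following walks made of such steps,
   g is determined on each connected component by its value c at one point, and
   v is semistatic iff for every component some c solves the scalar affine
   equations saying that two walks to the same point give the same value and
   that g y = v (y, y) whenever (y, y) is in E. Each equation reads a * c = b
   where a does not depend on v and b depends continuously on finitely many
   values of v. Such a system stays solvable under pointwise limits: either some
   a is nonzero, and then the solutions c_n = b_n / a converge, or every a is
   zero, and then every b_n is zero and so is every limit b. *)
From Stdlib Require Import Reals Lra Relations Classical ClassicalEpsilon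
  FunctionalExtensionality PropExtensionality.
Open Scope list_scope.
Open Scope R_scope.

Lemma Un_cv_const (k : R) : Un_cv (fun _ => k) k.
Proof.
  intros eps Heps. exists 0%nat. intros n _.
  unfold R_dist. rewrite Rminus_diag, Rabs_R0. exact Heps.
Qed.

Lemma affine_system_limit {I : Type} (P : I -> Prop) (a : I -> R)
    (bn : nat -> I -> R) (b : I -> R) :
  (forall i, P i -> Un_cv (fun n => bn n i) (b i)) ->
  (forall n, exists c, forall i, P i -> a i * c = bn n i) ->
  exists c, forall i, P i -> a i * c = b i.
Proof.
  intros bn_cv solvable.
  destruct (classic (exists i0, P i0 /\ a i0 <> 0)) as [[i0 [Pi0 a_i0]] | degenerate].
  - exists (b i0 / a i0). intros i Pi.
    assert (solution_n : forall n, a i * (bn n i0 / a i0) = bn n i).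
    { intro n. destruct (solvable n) as [c Hc].
      rewrite <- (Hc i0 Pi0), <- (Hc i Pi). field. exact a_i0. }
    apply (UL_sequence (fun n => bn n i)); [| exact (bn_cv i Pi)].
    apply (Un_cv_ext _ _ solution_n).
    apply CV_mult; [apply Un_cv_const |].
    apply CV_mult; [exact (bn_cv i0 Pi0) | apply Un_cv_const].
  - exists 0. intros i Pi.
    assert (a_i : a i = 0) by (apply NNPP; intro; apply degenerate; eauto).
    assert (bn_i : forall n, bn n i = 0).
    { intro n. destruct (solvable n) as [c Hc]. rewrite <- (Hc i Pi), a_i. ring. }
    rewrite a_i, Rmult_0_l.
    apply (UL_sequence (fun _ => 0)); [apply Un_cv_const |].
    exact (Un_cv_ext _ _ bn_i _ (bn_cv i Pi)).
Qed.

(* A walk from r is stored last step first: (x, y) :: w continues the walk w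
   from its end point through x to y. *)
Definition walk_end (r : R) (w : list (R * R)) : R :=
  match w with nil => r | (_, y) :: _ => y end.

Fixpoint is_walk (E : R -> R -> Prop) (r : R) (w : list (R * R)) : Prop :=
  match w with
  | nil => True
  | (x, y) :: w' =>
      is_walk E r w' /\ E x (walk_end r w') /\ E x y /\ walk_end r w' <> x
  end.

(* The value of g at the end of w forced by u and by g r = c. *)
Fixpoint propagate (u : R -> R -> R) (r : R) (w : list (R * R)) (c : R) : R :=
  match w with
  | nil => c
  | (x, y) :: w' =>
      u x y - (y - x) / (walk_end r w' - x) * (u x (walk_end r w') - propagate u r w' c)
  end.

Fixpoint gain (r : R) (w : list (R * R)) : R :=
  match w with
  | nil => 1
  | (x, y) :: w' => (y - x) / (walk_end r w' - x) * gain r w'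
  end.

Lemma propagate_affine u r w c :
  propagate u r w c = propagate u r w 0 + gain r w * c.
Proof.
  induction w as [| [x y] w IH]; simpl.
  - ring.
  - rewrite IH. ring.
Qed.

Lemma propagate_semistatic E u h g r w :
  (forall x y, E x y -> u x y = h x * (y - x) + g y) ->
  is_walk E r w -> propagate u r w (g r) = g (walk_end r w).
Proof.
  intros u_hg. induction w as [| [x y] w IH]; simpl; [reflexivity |].
  intros (walk_w & E_end & E_xy & end_x).
  rewrite IH, (u_hg x y E_xy), (u_hg x _ E_end) by exact walk_w.
  field. intro. apply end_x. lra.
Qed.

Lemma propagate_cv E un u r w c :
  (forall x y, E x y -> Un_cv (fun n => un n x y) (u x y)) ->
  is_walk E r w -> Un_cv (fun n => propagate (un n) r w c) (propagate u r w c).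
Proof.
  intros un_cv. induction w as [| [x y] w IH]; simpl.
  - intros _. apply Un_cv_const.
  - intros (walk_w & E_end & E_xy & _).
    apply CV_minus; [exact (un_cv x y E_xy) |].
    apply CV_mult; [apply Un_cv_const |].
    apply CV_minus; [exact (un_cv x _ E_end) | exact (IH walk_w)].
Qed.

Inductive constraint : Type :=
  | agree (w1 w2 : list (R * R))
  | diagonal (w : list (R * R)).

Definition is_constraint (E : R -> R -> Prop) (r : R) (i : constraint) : Prop :=
  match i with
  | agree w1 w2 => is_walk E r w1 /\ is_walk E r w2 /\ walk_end r w1 = walk_end r w2
  | diagonal w => is_walk E r w /\ E (walk_end r w) (walk_end r w)
  end.

Definition slope (r : R) (i : constraint) : R :=
  match i with
  | agree w1 w2 => gain r w1 - gain r w2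
  | diagonal w => gain r w
  end.

Definition offset (u : R -> R -> R) (r : R) (i : constraint) : R :=
  match i with
  | agree w1 w2 => propagate u r w2 0 - propagate u r w1 0
  | diagonal w => u (walk_end r w) (walk_end r w) - propagate u r w 0
  end.

Definition admissible (E : R -> R -> Prop) (u : R -> R -> R) (r c : R) : Prop :=
  forall i, is_constraint E r i -> slope r i * c = offset u r i.

Lemma admissible_agree E u r c w1 w2 :
  admissible E u r c -> is_walk E r w1 -> is_walk E r w2 ->
  walk_end r w1 = walk_end r w2 -> propagate u r w1 c = propagate u r w2 c.
Proof.
  intros adm walk1 walk2 same_end.
  pose proof (adm (agree w1 w2) (conj walk1 (conj walk2 same_end))) as eq; simpl in eq.
  rewrite (propagate_affine u r w1), (propagate_affine u r w2). lra.
Qed.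

Lemma admissible_diagonal E u r c w :
  admissible E u r c -> is_walk E r w -> E (walk_end r w) (walk_end r w) ->
  propagate u r w c = u (walk_end r w) (walk_end r w).
Proof.
  intros adm walk diag.
  pose proof (adm (diagonal w) (conj walk diag)) as eq; simpl in eq.
  rewrite propagate_affine. lra.
Qed.

Lemma semistatic_exists_admissible E u r :
  semistatic E u -> exists c, admissible E u r c.
Proof.
  intros (h & g & u_hg). exists (g r).
  intros [w1 w2 | w] constr; simpl in constr |- *.
  - destruct constr as (walk1 & walk2 & same_end).
    pose proof (propagate_semistatic E u h g r w1 u_hg walk1) as g1.
    pose proof (propagate_semistatic E u h g r w2 u_hg walk2) as g2.
    rewrite propagate_affine, same_end in g1. rewrite propagate_affine in g2. lra.
  - destruct constr as (walk & diag).
    pose proof (propagate_semistatic E u h g r w u_hg walk) as g_end.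
    rewrite propagate_affine in g_end. rewrite (u_hg _ _ diag). lra.
Qed.

Lemma offset_cv E un u r i :
  (forall x y, E x y -> Un_cv (fun n => un n x y) (u x y)) ->
  is_constraint E r i -> Un_cv (fun n => offset (un n) r i) (offset u r i).
Proof.
  intros un_cv. destruct i as [w1 w2 | w]; simpl.
  - intros (walk1 & walk2 & _).
    apply CV_minus; eapply propagate_cv; eassumption.
  - intros (walk & diag).
    apply CV_minus; [exact (un_cv _ _ diag) | eapply propagate_cv; eassumption].
Qed.

Section Components.

Variable E : R -> R -> Prop.

Definition linked (y1 y2 : R) : Prop :=
  exists x, E x y1 /\ E x y2 /\ y1 <> x /\ y2 <> x.

Definition connected : R -> R -> Prop := clos_refl_sym_trans R linked.

Definition root (y : R) : R := epsilon (inhabits 0) (fun r => connected r y).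

Definition walk_to (y : R) : list (R * R) :=
  epsilon (inhabits nil) (fun w => is_walk E (root y) w /\ walk_end (root y) w = y).

Lemma connected_root y : connected (root y) y.
Proof.
  apply (epsilon_spec (inhabits 0) (fun r => connected r y)).
  exists y. apply rst_refl.
Qed.

Lemma root_connected y1 y2 : connected y1 y2 -> root y1 = root y2.
Proof.
  intros c12. unfold root. f_equal.
  apply functional_extensionality. intro r.
  apply propositional_extensionality. split; intro c.
  - exact (rst_trans _ _ _ _ _ c c12).
  - exact (rst_trans _ _ _ _ _ c (rst_sym _ _ _ _ c12)).
Qed.

Lemma walk_of_connected r y :
  connected r y -> exists w, is_walk E r w /\ walk_end r w = y.
Proof.
  intros c. apply clos_rst_rstn1 in c.
  induction c as [| y z step _ IH].
  - exists nil. split; simpl; auto.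
  - destruct IH as (w & walk & w_end).
    assert (step' : exists x, E x y /\ E x z /\ y <> x)
      by (destruct step as [(x & ? & ? & ? & _) | (x & ? & ? & _ & ?)]; eauto).
    destruct step' as (x & E_xy & E_xz & y_x).
    exists ((x, z) :: w). simpl. rewrite w_end. auto.
Qed.

Lemma walk_to_spec y : is_walk E (root y) (walk_to y) /\ walk_end (root y) (walk_to y) = y.
Proof.
  apply (epsilon_spec (inhabits nil)
    (fun w => is_walk E (root y) w /\ walk_end (root y) w = y)).
  exact (walk_of_connected _ _ (connected_root y)).
Qed.

End Components.

Section Reconstruction.

Variables (E : R -> R -> Prop) (v : R -> R -> R).
Hypothesis v_admissible : forall r, exists c, admissible E v r c.

Definition base (r : R) : R := epsilon (inhabits 0) (admissible E v r).

Definition g_of (y : R) : R := propagate v (root E y) (walk_to E y) (base (root E y)).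

Definition h_of (x : R) : R :=
  let y := epsilon (inhabits 0) (fun y => E x y /\ y <> x) in
  (v x y - g_of y) / (y - x).

Lemma base_admissible r : admissible E v r (base r).
Proof. exact (epsilon_spec (inhabits 0) (admissible E v r) (v_admissible r)). Qed.

Lemma g_of_diagonal x : E x x -> g_of x = v x x.
Proof.
  intros diag. destruct (walk_to_spec E x) as [walk w_end].
  unfold g_of. rewrite (admissible_diagonal E v _ _ _ (base_admissible _) walk);
    rewrite w_end; auto.
Qed.

Lemma g_of_step x y y' :
  E x y -> E x y' -> y <> x -> y' <> x ->
  v x y = (v x y' - g_of y') / (y' - x) * (y - x) + g_of y.
Proof.
  intros E_xy E_xy' y_x y'_x.
  assert (same_root : root E y' = root E y)
    by (apply root_connected, rst_step; exists x; auto).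
  destruct (walk_to_spec E y) as [walk w_end].
  destruct (walk_to_spec E y') as [walk' w'_end].
  rewrite same_root in walk', w'_end.
  assert (extended : is_walk E (root E y) ((x, y) :: walk_to E y'))
    by (simpl; rewrite w'_end; auto).
  pose proof (admissible_agree E v _ _ _ _ (base_admissible (root E y)) extended walk)
    as agree_y.
  simpl in agree_y. rewrite w'_end, w_end in agree_y.
  unfold g_of. rewrite same_root, <- (agree_y eq_refl).
  field. intro. apply y'_x. lra.
Qed.

Lemma semistatic_of_admissible : semistatic E v.
Proof.
  exists h_of, g_of. intros x y E_xy.
  destruct (Req_dec y x) as [-> | y_x].
  - rewrite g_of_diagonal by exact E_xy. ring.
  - destruct (epsilon_spec (inhabits 0) (fun y' => E x y' /\ y' <> x)
      (ex_intro _ y (conj E_xy y_x))) as [E_xy' y'_x].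
    exact (g_of_step x y _ E_xy E_xy' y_x y'_x).
Qed.

End Reconstruction.

Theorem theorem2p2 (E : R -> R -> Prop) (vn : nat -> R -> R -> R) (v : R -> R -> R) :
  (forall n : nat, semistatic E (vn n)) ->
  (forall x y : R, E x y -> Un_cv (fun n => vn n x y) (v x y)) ->
  semistatic E v.
Proof.
  intros vn_semistatic vn_cv.
  apply semistatic_of_admissible. intro r.
  apply (affine_system_limit (is_constraint E r) (slope r)
           (fun n => offset (vn n) r) (offset v r)).
  - intros i constr. exact (offset_cv E vn v r i vn_cv constr).
  - intro n. exact (semistatic_exists_admissible E (vn n) r (vn_semistatic n)).
Qed.
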